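(* For any two symmetric positive definite matrices $\mathbb A,\mathbb B\in\mathbb R^{d\times d}$, $$\mathrm{tr}\big((\log\mathbb A-\log\mathbb B)^2\big)\le-\mathrm{tr}\big((\mathbb A-\mathbb B)(\mathbb A^{-1}-\mathbb B^{-1})\big),$$ and consequently $$|\mathrm{tr}(\log\mathbb A)-\mathrm{tr}(\log\mathbb B)|^2\le-d\,\mathrm{tr}\big((\mathbb A-\mathbb B)(\mathbb A^{-1}-\mathbb B^{-1})\big).$$
   Context: For a symmetric positive definite $\mathbb A=\mathbb O\,\mathrm{diag}(\lambda_i)\mathbb O^{\rm T}$ ($\mathbb O$ orthogonal, $\lambda_i>0$), $\log\mathbb A=\mathbb O\,\mathrm{diag}(\log\lambda_i)\mathbb O^{\rm T}$. *)

From Stdlib Require Import Reals Lra Lia ClassicalEpsilon.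
Open Scope R_scope.

(* A d x d real matrix is a function nat -> nat -> R; only entries with
   indices < d are meaningful. *)
Definition mat := nat -> nat -> R.

Fixpoint msum (n : nat) (f : nat -> R) : R :=
  match n with O => 0 | S k => msum k f + f k end.

Definition mat_eq (d : nat) (A B : mat) : Prop :=
  forall i j, (i < d)%nat -> (j < d)%nat -> A i j = B i j.

Definition mmul (d : nat) (A B : mat) : mat :=
  fun i j => msum d (fun k => A i k * B k j).
Definition madd (A B : mat) : mat := fun i j => A i j + B i j.
Definition msub (A B : mat) : mat := fun i j => A i j - B i j.
Definition mtrans (A : mat) : mat := fun i j => A j i.
Definition idm : mat := fun i j => if Nat.eq_dec i j then 1 else 0.
Definition diagm (l : nat -> R) : mat := fun i j => if Nat.eq_dec i j then l i else 0.
Definition mtr (d : nat) (A : mat) : R := msum d (fun i => A i i).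

Definition symmetric (d : nat) (A : mat) : Prop :=
  forall i j, (i < d)%nat -> (j < d)%nat -> A i j = A j i.

Definition spd (d : nat) (A : mat) : Prop :=
  symmetric d A /\
  forall x : nat -> R, (exists i, (i < d)%nat /\ x i <> 0) ->
    0 < msum d (fun i => x i * msum d (fun j => A i j * x j)).

Definition orthogonal (d : nat) (O : mat) : Prop :=
  mat_eq d (mmul d (mtrans O) O) idm /\ mat_eq d (mmul d O (mtrans O)) idm.

(* matrix inverse (chosen by Hilbert epsilon; determined on indices < d
   whenever A is invertible) *)
Definition minv (d : nat) (A : mat) : mat :=
  epsilon (inhabits (fun _ _ => 0))
    (fun X => mat_eq d (mmul d A X) idm /\ mat_eq d (mmul d X A) idm).

Definition is_logm (d : nat) (A L : mat) : Prop :=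
  exists (O : mat) (lam : nat -> R),
    orthogonal d O /\ (forall i, (i < d)%nat -> 0 < lam i) /\
    mat_eq d A (mmul d (mmul d O (diagm lam)) (mtrans O)) /\
    mat_eq d L (mmul d (mmul d O (diagm (fun i => ln (lam i)))) (mtrans O)).

From Stdlib Require Import Reals Lra Lia ClassicalEpsilon.
From Coquelicot Require Import Coquelicot.
Open Scope R_scope.

(* Write A = O diag(a) O^T and B = P diag(b) P^T, and let c_ij = (O^T P)_ij.
   For X, X' diagonalized by O and Y, Y' diagonalized by P,
     tr((X - Y)(X' - Y')) = sum_ij c_ij^2 (x_i - y_j)(x'_i - y'_j),
   because the matrix (c_ij^2) is doubly stochastic.  Applied to the logarithms
   and to A, A^-1, B, B^-1, the first inequality reduces entrywise to the scalar
   inequality (ln a - ln b)^2 <= a/b + b/a - 2, i.e. t^2 <= 4 sinh^2 (t/2).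
   The second follows from (tr M)^2 <= d sum_i M_ii^2 <= d tr(M^2) for the
   symmetric matrix M = log A - log B. *)

Lemma msum_ext n f g :
  (forall k, (k < n)%nat -> f k = g k) -> msum n f = msum n g.
Proof.
  induction n as [|n IH]; intros H; simpl; [reflexivity|].
  rewrite IH, H; [reflexivity|lia|intros; apply H; lia].
Qed.

Lemma msum_const n c : msum n (fun _ => c) = INR n * c.
Proof. induction n as [|n IH]; [simpl; ring|]. rewrite S_INR; simpl; rewrite IH; ring. Qed.

Lemma msum_add n f g : msum n (fun k => f k + g k) = msum n f + msum n g.
Proof. induction n as [|n IH]; simpl; [ring|rewrite IH; ring]. Qed.

Lemma msum_opp n f : msum n (fun k => - f k) = - msum n f.
Proof. induction n as [|n IH]; simpl; [ring|rewrite IH; ring]. Qed.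

Lemma msum_sub n f g : msum n (fun k => f k - g k) = msum n f - msum n g.
Proof. induction n as [|n IH]; simpl; [ring|rewrite IH; ring]. Qed.

Lemma msum_scal_l n c f : msum n (fun k => c * f k) = c * msum n f.
Proof. induction n as [|n IH]; simpl; [ring|rewrite IH; ring]. Qed.

Lemma msum_scal_r n c f : msum n (fun k => f k * c) = msum n f * c.
Proof. induction n as [|n IH]; simpl; [ring|rewrite IH; ring]. Qed.

Lemma msum_swap n m f :
  msum n (fun i => msum m (fun j => f i j)) = msum m (fun j => msum n (fun i => f i j)).
Proof.
  induction n as [|n IH]; simpl.
  - rewrite msum_const; ring.
  - rewrite IH, <- msum_add; reflexivity.
Qed.

Lemma msum_mul_msum n m f g :
  msum n f * msum m g = msum n (fun i => msum m (fun j => f i * g j)).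
Proof.
  rewrite <- msum_scal_r. apply msum_ext; intros.
  rewrite <- msum_scal_l; reflexivity.
Qed.

Lemma msum_le n f g :
  (forall k, (k < n)%nat -> f k <= g k) -> msum n f <= msum n g.
Proof.
  induction n as [|n IH]; intros H; simpl; [lra|].
  apply Rplus_le_compat; [apply IH; intros|]; apply H; lia.
Qed.

Lemma msum_ge0 n f : (forall k, (k < n)%nat -> 0 <= f k) -> 0 <= msum n f.
Proof.
  intros H. rewrite <- (Rmult_0_r (INR n)), <- msum_const. now apply msum_le.
Qed.

Lemma msum_ge_term n f i :
  (forall k, (k < n)%nat -> 0 <= f k) -> (i < n)%nat -> f i <= msum n f.
Proof.
  induction n as [|n IH]; intros H Hi; [lia|simpl].
  assert (0 <= msum n f) by (apply msum_ge0; intros; apply H; lia).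
  assert (0 <= f n) by (apply H; lia).
  destruct (Nat.eq_dec i n) as [->|]; [lra|].
  assert (f i <= msum n f) by (apply IH; [intros; apply H|]; lia).
  lra.
Qed.

Lemma msum_idm_l n i f : (i < n)%nat -> msum n (fun j => idm i j * f j) = f i.
Proof.
  induction n as [|n IH]; intros Hi; [lia|simpl]. unfold idm at 2.
  destruct (Nat.eq_dec i n) as [->|].
  - rewrite (msum_ext n _ (fun _ => 0)), msum_const; [ring|].
    intros k Hk; unfold idm; destruct (Nat.eq_dec n k); [lia|ring].
  - rewrite IH by lia; ring.
Qed.

Lemma msum_idm_r n i f : (i < n)%nat -> msum n (fun j => f j * idm j i) = f i.
Proof.
  intros Hi. rewrite <- (msum_idm_l n i f Hi). apply msum_ext; intros k _.
  unfold idm; destruct (Nat.eq_dec k i), (Nat.eq_dec i k); subst; try ring; congruence.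
Qed.

(* Cauchy-Schwarz against the all-ones vector. *)
Lemma msum_sqr_le n x : (msum n x) ^ 2 <= INR n * msum n (fun k => x k ^ 2).
Proof.
  induction n as [|n IH]; [simpl; lra|]. rewrite S_INR; cbn [msum].
  assert (Hdev : 0 <= msum n (fun k => x k ^ 2 - 2 * x n * x k + x n ^ 2)).
  { apply msum_ge0; intros k _.
    replace (x k ^ 2 - 2 * x n * x k + x n ^ 2) with ((x k - x n) ^ 2) by ring.
    apply pow2_ge_0. }
  rewrite msum_add, msum_sub, msum_scal_l, msum_const in Hdev.
  nra.
Qed.

Lemma msum_swap_pairs n m f :
  msum n (fun a => msum n (fun b => msum m (fun c => msum m (fun e => f a b c e)))) =
  msum m (fun c => msum m (fun e => msum n (fun a => msum n (fun b => f a b c e)))).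
Proof.
  transitivity (msum n (fun a => msum m (fun c => msum m (fun e => msum n (fun b => f a b c e))))).
  { apply msum_ext; intros a _.
    rewrite (msum_swap n m (fun b c => msum m (fun e => f a b c e))).
    apply msum_ext; intros c _. apply msum_swap. }
  rewrite msum_swap. apply msum_ext; intros c _. apply msum_swap.
Qed.

Lemma mmul_msub_l d X Y Z i j : mmul d (msub X Y) Z i j = mmul d X Z i j - mmul d Y Z i j.
Proof. unfold mmul, msub. rewrite <- msum_sub. apply msum_ext; intros; ring. Qed.

Lemma mmul_msub_r d X Y Z i j : mmul d X (msub Y Z) i j = mmul d X Y i j - mmul d X Z i j.
Proof. unfold mmul, msub. rewrite <- msum_sub. apply msum_ext; intros; ring. Qed.

Lemma mmul_assoc d X Y Z i j : mmul d (mmul d X Y) Z i j = mmul d X (mmul d Y Z) i j.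
Proof.
  unfold mmul. rewrite (msum_ext d _ (fun t => msum d (fun u => X i u * Y u t * Z t j))).
  - rewrite msum_swap. apply msum_ext; intros.
    rewrite <- msum_scal_l. apply msum_ext; intros; ring.
  - intros. rewrite <- msum_scal_r. reflexivity.
Qed.

Lemma mtr_msub d X Y : mtr d (msub X Y) = mtr d X - mtr d Y.
Proof. apply msum_sub. Qed.

Lemma symmetric_msub d X Y : symmetric d X -> symmetric d Y -> symmetric d (msub X Y).
Proof. intros HX HY i j Hi Hj. unfold msub. rewrite HX, HY by assumption. reflexivity. Qed.

Lemma mtr_mmul_sqr_le d M :
  symmetric d M -> (mtr d M) ^ 2 <= INR d * mtr d (mmul d M M).
Proof.
  intros HM.
  assert (Hdiag : msum d (fun i => M i i ^ 2) <= mtr d (mmul d M M)).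
  { apply msum_le; intros i Hi. unfold mmul.
    rewrite (msum_ext d _ (fun j => M i j ^ 2)).
    - apply (msum_ge_term d (fun j => M i j ^ 2)); [intros; apply pow2_ge_0|assumption].
    - intros j Hj. rewrite (HM j i) by assumption. ring. }
  pose proof (msum_sqr_le d (fun i => M i i)). pose proof (pos_INR d).
  unfold mtr at 1. nra.
Qed.

Lemma orthogonal_cols d O i j :
  orthogonal d O -> (i < d)%nat -> (j < d)%nat -> msum d (fun k => O k i * O k j) = idm i j.
Proof. intros [HO _] Hi Hj. rewrite <- HO by assumption. reflexivity. Qed.

Lemma orthogonal_rows d O i j :
  orthogonal d O -> (i < d)%nat -> (j < d)%nat -> msum d (fun k => O i k * O j k) = idm i j.
Proof. intros [_ HO] Hi Hj. rewrite <- HO by assumption. reflexivity. Qed.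

Lemma orthogonal_norm d P v :
  orthogonal d P -> msum d (fun j => (msum d (fun k => v k * P k j)) ^ 2) = msum d (fun k => v k ^ 2).
Proof.
  intros HP.
  transitivity (msum d (fun k => msum d (fun l => v k * v l * msum d (fun j => P k j * P l j)))).
  - rewrite (msum_ext d _ (fun j => msum d (fun k => msum d (fun l => v k * P k j * (v l * P l j))))).
    + rewrite msum_swap. apply msum_ext; intros k _.
      rewrite msum_swap. apply msum_ext; intros l _.
      rewrite <- msum_scal_l. apply msum_ext; intros; ring.
    + intros j _. simpl. rewrite Rmult_1_r. apply msum_mul_msum.
  - apply msum_ext; intros k Hk.
    transitivity (v k * v k); [|ring].
    rewrite <- (msum_idm_l d k (fun l => v k * v l)) by assumption.
    apply msum_ext; intros l Hl. rewrite orthogonal_rows by assumption. ring.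
Qed.

Definition diagonalized_by (d : nat) (O : mat) (x : nat -> R) (X : mat) : Prop :=
  mat_eq d X (mmul d (mmul d O (diagm x)) (mtrans O)).

Lemma diagonalized_by_entry d O x X r s :
  diagonalized_by d O x X -> (r < d)%nat -> (s < d)%nat ->
  X r s = msum d (fun i => O r i * x i * O s i).
Proof.
  intros HX Hr Hs. rewrite HX by assumption. unfold mmul, mtrans.
  apply msum_ext; intros k Hk.
  rewrite (msum_ext d _ (fun l => O r l * x l * idm l k)).
  - rewrite msum_idm_r by assumption. ring.
  - intros l _. unfold diagm, idm. destruct (Nat.eq_dec l k); ring.
Qed.

Lemma diagonalized_by_symmetric d O x X : diagonalized_by d O x X -> symmetric d X.
Proof.
  intros HX r s Hr Hs. rewrite !(diagonalized_by_entry d O x X) by assumption.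
  apply msum_ext; intros; ring.
Qed.

Lemma mtr_mmul_diagonalized d O P x y X Y :
  diagonalized_by d O x X -> diagonalized_by d P y Y ->
  mtr d (mmul d X Y) =
  msum d (fun i => msum d (fun j => x i * y j * (mmul d (mtrans O) P i j) ^ 2)).
Proof.
  intros HX HY. unfold mtr, mmul at 1.
  transitivity (msum d (fun r => msum d (fun s => msum d (fun i => msum d (fun j =>
                  O r i * x i * O s i * (P s j * y j * P r j)))))).
  { apply msum_ext; intros r Hr. apply msum_ext; intros s Hs.
    rewrite (diagonalized_by_entry d O x X r s), (diagonalized_by_entry d P y Y s r)
      by assumption.
    apply msum_mul_msum. }
  rewrite msum_swap_pairs. apply msum_ext; intros i _. apply msum_ext; intros j _.
  unfold mmul, mtrans. simpl. rewrite Rmult_1_r, msum_mul_msum, <- msum_scal_l.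
  apply msum_ext; intros r _. rewrite <- msum_scal_l. apply msum_ext; intros s _. ring.
Qed.

Lemma msum_sqr_mtrans_mmul_row d O P i :
  orthogonal d O -> orthogonal d P -> (i < d)%nat ->
  msum d (fun j => (mmul d (mtrans O) P i j) ^ 2) = 1.
Proof.
  intros HO HP Hi. unfold mmul, mtrans.
  rewrite (orthogonal_norm d P (fun k => O k i)) by assumption.
  rewrite (msum_ext d _ (fun k => O k i * O k i)) by (intros; ring).
  rewrite orthogonal_cols by assumption. unfold idm. now destruct (Nat.eq_dec i i).
Qed.

Lemma msum_sqr_mtrans_mmul_col d O P j :
  orthogonal d O -> orthogonal d P -> (j < d)%nat ->
  msum d (fun i => (mmul d (mtrans O) P i j) ^ 2) = 1.
Proof.
  intros HO HP Hj. rewrite <- (msum_sqr_mtrans_mmul_row d P O j) by assumption.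
  apply msum_ext; intros. unfold mmul, mtrans. f_equal. apply msum_ext; intros; ring.
Qed.

Lemma mtr_mmul_diagonalized_same d O x y X Y :
  orthogonal d O -> diagonalized_by d O x X -> diagonalized_by d O y Y ->
  mtr d (mmul d X Y) = msum d (fun i => x i * y i).
Proof.
  intros HO HX HY. rewrite (mtr_mmul_diagonalized d O O x y X Y) by assumption.
  apply msum_ext; intros i Hi.
  rewrite <- (msum_idm_l d i (fun j => x i * y j)) by assumption.
  apply msum_ext; intros j Hj. unfold mmul, mtrans.
  rewrite orthogonal_cols by assumption. unfold idm. destruct (Nat.eq_dec i j); ring.
Qed.

Lemma mtr_mmul_msub_diagonalized d O P x x' y y' X X' Y Y' :
  orthogonal d O -> orthogonal d P ->
  diagonalized_by d O x X -> diagonalized_by d O x' X' ->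
  diagonalized_by d P y Y -> diagonalized_by d P y' Y' ->
  mtr d (mmul d (msub X Y) (msub X' Y')) =
  msum d (fun i => msum d (fun j =>
    (mmul d (mtrans O) P i j) ^ 2 * ((x i - y j) * (x' i - y' j)))).
Proof.
  intros HO HP HX HX' HY HY'.
  set (c i j := mmul d (mtrans O) P i j).
  assert (Hexpand : mtr d (mmul d (msub X Y) (msub X' Y')) =
    mtr d (mmul d X X') - mtr d (mmul d X Y') - mtr d (mmul d Y X') + mtr d (mmul d Y Y')).
  { unfold mtr. rewrite <- !msum_sub, <- msum_add. apply msum_ext; intros.
    rewrite mmul_msub_l, !mmul_msub_r. ring. }
  assert (HXX : msum d (fun i => x i * x' i) =
                msum d (fun i => msum d (fun j => c i j ^ 2 * (x i * x' i)))).
  { apply msum_ext; intros i Hi.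
    unfold c. rewrite msum_scal_r, msum_sqr_mtrans_mmul_row by assumption. ring. }
  assert (HYY : msum d (fun j => y j * y' j) =
                msum d (fun i => msum d (fun j => c i j ^ 2 * (y j * y' j)))).
  { rewrite msum_swap. apply msum_ext; intros j Hj.
    unfold c. rewrite msum_scal_r, msum_sqr_mtrans_mmul_col by assumption. ring. }
  assert (HYX : msum d (fun i => msum d (fun j => y i * x' j * mmul d (mtrans P) O i j ^ 2)) =
                msum d (fun i => msum d (fun j => c i j ^ 2 * (y j * x' i)))).
  { rewrite msum_swap. apply msum_ext; intros i _. apply msum_ext; intros j _.
    unfold c, mmul, mtrans. rewrite (msum_ext d _ (fun k => O k i * P k j)) by (intros; ring).
    ring. }
  rewrite Hexpand,
    (mtr_mmul_diagonalized_same d O x x' X X'), (mtr_mmul_diagonalized_same d P y y' Y Y'),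
    (mtr_mmul_diagonalized d O P x y' X Y'), (mtr_mmul_diagonalized d P O y x' Y X'),
    HXX, HYY, HYX by assumption.
  rewrite <- !msum_sub, <- msum_add. apply msum_ext; intros i _.
  rewrite <- !msum_sub, <- msum_add. apply msum_ext; intros j _.
  fold (c i j). ring.
Qed.

Lemma mmul_diagonalized d O x y X Y r s :
  orthogonal d O -> diagonalized_by d O x X -> diagonalized_by d O y Y ->
  (r < d)%nat -> (s < d)%nat ->
  mmul d X Y r s = msum d (fun i => O r i * (x i * y i) * O s i).
Proof.
  intros HO HX HY Hr Hs. unfold mmul.
  transitivity (msum d (fun t => msum d (fun i => msum d (fun j =>
                  O r i * x i * O t i * (O t j * y j * O s j))))).
  { apply msum_ext; intros t Ht.
    rewrite (diagonalized_by_entry d O x X r t), (diagonalized_by_entry d O y Y t s)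
      by assumption.
    apply msum_mul_msum. }
  rewrite msum_swap. apply msum_ext; intros i Hi. rewrite msum_swap.
  transitivity (msum d (fun j => idm i j * (O r i * x i * y j * O s j))).
  - apply msum_ext; intros j Hj. rewrite <- (orthogonal_cols d O i j) by assumption.
    rewrite <- msum_scal_r. apply msum_ext; intros; ring.
  - rewrite msum_idm_l by assumption. ring.
Qed.

Lemma mmul_idm_r d X i j : (j < d)%nat -> mmul d X idm i j = X i j.
Proof. intros Hj. exact (msum_idm_r d j (fun k => X i k) Hj). Qed.

Lemma mmul_idm_l d X i j : (i < d)%nat -> mmul d idm X i j = X i j.
Proof. intros Hi. exact (msum_idm_l d i (fun k => X k j) Hi). Qed.

Lemma minv_eq d A Y :
  mat_eq d (mmul d A Y) idm -> mat_eq d (mmul d Y A) idm -> mat_eq d (minv d A) Y.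
Proof.
  intros HAY HYA. unfold minv.
  destruct (epsilon_spec (inhabits (fun _ _ => 0))
    (fun X => mat_eq d (mmul d A X) idm /\ mat_eq d (mmul d X A) idm)
    (ex_intro _ Y (conj HAY HYA))) as [_ HXA].
  set (X := epsilon _ _) in *.
  intros r s Hr Hs.
  transitivity (mmul d X (mmul d A Y) r s).
  - rewrite <- (mmul_idm_r d X r s) by assumption.
    apply msum_ext; intros. rewrite HAY by assumption. reflexivity.
  - rewrite <- mmul_assoc, <- (mmul_idm_l d Y r s) by assumption.
    apply msum_ext; intros. rewrite HXA by assumption. reflexivity.
Qed.

Lemma diagonalized_by_minv d O a A :
  orthogonal d O -> (forall i, (i < d)%nat -> 0 < a i) -> diagonalized_by d O a A ->
  diagonalized_by d O (fun i => / a i) (minv d A).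
Proof.
  intros HO Ha HA.
  set (Y := mmul d (mmul d O (diagm (fun i => / a i))) (mtrans O)).
  assert (HY : diagonalized_by d O (fun i => / a i) Y) by (intros r s _ _; reflexivity).
  assert (Hid : forall u v, (forall i, (i < d)%nat -> u i * v i = 1) ->
     forall U V, diagonalized_by d O u U -> diagonalized_by d O v V -> mat_eq d (mmul d U V) idm).
  { intros u v Huv U V HU HV r s Hr Hs.
    rewrite (mmul_diagonalized d O u v) by assumption.
    rewrite <- (orthogonal_rows d O r s) by assumption.
    apply msum_ext; intros i Hi. rewrite Huv by assumption. ring. }
  assert (HAY : mat_eq d (mmul d A Y) idm).
  { apply (Hid a (fun i => / a i)); [|assumption..].
    intros i Hi. specialize (Ha i Hi). field. lra. }
  assert (HYA : mat_eq d (mmul d Y A) idm).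
  { apply (Hid (fun i => / a i) a); [|assumption..].
    intros i Hi. specialize (Ha i Hi). field. lra. }
  intros r s Hr Hs. rewrite (minv_eq d A Y HAY HYA r s Hr Hs). apply HY; assumption.
Qed.

(* Derivative of [exp x - exp (-x) - 2 x] is [(exp (x/2) - exp (-x/2))^2 >= 0]. *)
Lemma exp_sub_exp_opp_ge s : 0 <= s -> 2 * s <= exp s - exp (- s).
Proof.
  intros Hs.
  set (f x := exp x - exp (- x) - 2 * x).
  assert (Df : forall x, derivable_pt_lim f x (exp x + exp (- x) - 2)).
  { intros x. apply is_derive_Reals. unfold f. auto_derive; [exact I|ring]. }
  assert (Hinc : increasing f).
  { apply (nonneg_derivative_1 f (fun x => exist _ _ (Df x))). intros x. simpl.
    pose proof (exp_pos x). rewrite exp_Ropp.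
    replace (exp x + / exp x - 2) with ((exp x - 1) ^ 2 / exp x) by (field; lra).
    apply Rdiv_le_0_compat; [apply pow2_ge_0|assumption]. }
  specialize (Hinc 0 s Hs). unfold f in Hinc. rewrite Ropp_0, exp_0 in Hinc. lra.
Qed.

(* With s = (ln a - ln b) / 2 the right-hand side is (exp s - exp (-s))^2. *)
Lemma sqr_ln_sub_le a b : 0 < a -> 0 < b ->
  (ln a - ln b) * (ln a - ln b) <= - ((a - b) * (/ a - / b)).
Proof.
  intros Ha Hb.
  set (s := (ln a - ln b) / 2).
  assert (Hs2 : exp s * exp s = a / b).
  { rewrite <- exp_plus. replace (s + s) with (ln a - ln b) by (unfold s; field).
    unfold Rminus. rewrite exp_plus, exp_Ropp, !exp_ln by assumption. field; lra. }
  assert (Hrhs : - ((a - b) * (/ a - / b)) = (exp s - exp (- s)) * (exp s - exp (- s))).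
  { pose proof (exp_pos s). rewrite exp_Ropp.
    transitivity (a / b + b / a - 2); [field; lra|].
    replace (b / a) with (/ (a / b)) by (field; lra).
    rewrite <- Hs2. field. lra. }
  rewrite Hrhs. replace (ln a - ln b) with (2 * s) by (unfold s; field).
  destruct (Rle_dec 0 s).
  - pose proof (exp_sub_exp_opp_ge s). nra.
  - pose proof (exp_sub_exp_opp_ge (- s)). rewrite Ropp_involutive in H. nra.
Qed.

Lemma mtr_sqr_msub_logm_le d O P a b A B LA LB :
  orthogonal d O -> orthogonal d P ->
  (forall i, (i < d)%nat -> 0 < a i) -> (forall i, (i < d)%nat -> 0 < b i) ->
  diagonalized_by d O a A -> diagonalized_by d P b B ->
  diagonalized_by d O (fun i => ln (a i)) LA -> diagonalized_by d P (fun i => ln (b i)) LB ->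
  mtr d (mmul d (msub LA LB) (msub LA LB))
    <= - mtr d (mmul d (msub A B) (msub (minv d A) (minv d B))).
Proof.
  intros HO HP Ha Hb HA HB HLA HLB.
  pose proof (diagonalized_by_minv d O a A HO Ha HA) as HAinv.
  pose proof (diagonalized_by_minv d P b B HP Hb HB) as HBinv.
  rewrite (mtr_mmul_msub_diagonalized d O P _ _ _ _ LA LA LB LB HO HP HLA HLA HLB HLB),
    (mtr_mmul_msub_diagonalized d O P _ _ _ _ A (minv d A) B (minv d B) HO HP HA HAinv HB HBinv).
  rewrite <- msum_opp. apply msum_le; intros i Hi.
  rewrite <- msum_opp. apply msum_le; intros j Hj.
  rewrite Ropp_mult_distr_r. apply Rmult_le_compat_l; [apply pow2_ge_0|].
  apply sqr_ln_sub_le; auto.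
Qed.

Theorem mainTheorem5 (d : nat) (A B LA LB : mat) :
  spd d A -> spd d B -> is_logm d A LA -> is_logm d B LB ->
  mtr d (mmul d (msub LA LB) (msub LA LB))
    <= - mtr d (mmul d (msub A B) (msub (minv d A) (minv d B)))
  /\
  (Rabs (mtr d LA - mtr d LB)) ^ 2
    <= - INR d * mtr d (mmul d (msub A B) (msub (minv d A) (minv d B))).
Proof.
  (* [is_logm] already supplies spectral decompositions with positive eigenvalues. *)
  intros _ _ [O [a [HO [Ha [HA HLA]]]]] [P [b [HP [Hb [HB HLB]]]]].
  assert (Hlog : mtr d (mmul d (msub LA LB) (msub LA LB))
                   <= - mtr d (mmul d (msub A B) (msub (minv d A) (minv d B))))
    by exact (mtr_sqr_msub_logm_le d O P a b A B LA LB HO HP Ha Hb HA HB HLA HLB).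
  split; [exact Hlog|].
  assert (Hsym : symmetric d (msub LA LB))
    by (apply symmetric_msub; eapply diagonalized_by_symmetric; eassumption).
  pose proof (mtr_mmul_sqr_le d (msub LA LB) Hsym). pose proof (pos_INR d).
  rewrite mtr_msub in *. rewrite pow2_abs. nra.
Qed.
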